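(* Let $\mathcal{G}_n$ be the set of binary words of length $2n$ with $n$ zeros and $n$ ones. For integers $k,\ell\ge0$, the number of words in $\mathcal{G}_n$ with exactly $k$ occurrences of $001$ (as consecutive subword) equals $$\binom{n}{2k}\binom{2k}{k}2^{n-2k},$$ and the number of words in $\mathcal{G}_n$ with exactly $k$ occurrences of $001$ and exactly $\ell$ occurrences of $01$ (as consecutive subwords) equals $$\binom{n}{2k}\binom{2k}{k}\binom{n-2k}{\ell-k},$$ which, when $k\le\ell\le n-k$, equals $\dfrac{n!}{k!^2(\ell-k)!(n-k-\ell)!}$.
   Context: Binomial coefficients $\binom{a}{b}$ are $0$ when $b<0$ or $b>a$. *)

From mathcomp Require Import all_boot all_order all_algebra.
Set Implicit Arguments. Unset Strict Implicit. Unset Printing Implicit Defensive.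

(* Binary words: false = 0, true = 1. *)

Definition occ (w p : seq bool) : nat :=
  count (fun i => take (size p) (drop i w) == p) (iota 0 (size w)).

Definition inG (n : nat) (w : (2 * n).-tuple bool) : bool :=
  (count_mem false w == n) && (count_mem true w == n).

Definition binz (a b : int) : nat :=
  match a, b with
  | Posz a', Posz b' => 'C(a', b')
  | _, _ => 0
  end.

From mathcomp Require Import all_boot all_order all_algebra.
From mathcomp Require Import zify ring.
Set Implicit Arguments. Unset Strict Implicit. Unset Printing Implicit Defensive.

(* Prepending 1 to a word creates no occurrence of 01 or 001, while prepending
   0 creates a 01 exactly when the word starts with 1 and a 001 exactly when it
   starts with 01.  Sorting words by these three kinds of beginnings, the
   numbers of words with given numbers of zeros, ones, 001's and 01's satisfy a
   first-order recursion in the length, solved by closed forms whose sum says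
   that there are C(b, l) C(l, k) C(x, k) words with b ones, l + x zeros, l
   occurrences of 01 and k of 001.  For b = l + x = n this product rearranges
   into C(n, 2k) C(2k, k) C(n - 2k, l - k), and summing over l gives
   C(n, 2k) C(2k, k) 2^(n - 2k). *)

Lemma card_tuple_cons (T : finType) m (P : pred (seq T)) :
  #|[set w : m.+1.-tuple T | P w]| = \sum_(x : T) #|[set v : m.-tuple T | P (x :: v)]|.
Proof.
rewrite -sum1dep_card (reindex (fun xv : T * m.-tuple T => [tuple of xv.1 :: xv.2])) /=.
  rewrite -(pair_big_dep xpredT (fun x (v : m.-tuple T) => P (x :: v)) (fun _ _ => 1)) /=.
  by apply: eq_bigr => x _; rewrite sum1dep_card.
exists (fun w : m.+1.-tuple T => (thead w, [tuple of behead w])) => [[x v] _ | w _].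
  by congr (_, _); apply: val_inj.
by rewrite [in RHS](tuple_eta w); apply: val_inj.
Qed.

Lemma card_partition_nat (T : finType) (P : pred T) (f : T -> nat) B :
  (forall x, P x -> f x < B) ->
  #|[set x | P x]| = \sum_(0 <= i < B) #|[set x | P x && (f x == i)]|.
Proof.
move=> fB; rewrite -sum1dep_card.
under [RHS]eq_bigr => i _ do rewrite -sum1dep_card big_mkcondr /=.
rewrite exchange_big /=; apply: eq_bigr => x Px.
rewrite -big_mkcond /=.
under eq_bigl => i do rewrite eq_sym.
by rewrite big_nat1_eq /= fB.
Qed.

Lemma bin_mul_sub m i j : 'C(m, i) * 'C(m - i, j) = 'C(m, i + j) * 'C(i + j, i).
Proof.
case: (leqP (i + j) m) => [le_ijm | lt_mij]; last first.
  rewrite [in RHS]bin_small // mul0n; case: (leqP i m) => [le_im | lt_mi].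
    by rewrite [in LHS](@bin_small (m - i)) ?muln0 // ltn_subLR.
  by rewrite bin_small.
have le_im : i <= m by apply: leq_trans le_ijm; apply: leq_addr.
have e1 := bin_fact le_im.
have e2 : 'C(m - i, j) * (j`! * (m - i - j)`!) = (m - i)`!.
  by rewrite bin_fact // leq_subRL.
have e3 := bin_fact le_ijm.
have e4 := bin_fact (leq_addr j i); rewrite addKn in e4.
have fact_pos : 0 < i`! * j`! * (m - i - j)`! by rewrite !muln_gt0 !fact_gt0.
apply/eqP; rewrite -(eqn_pmul2r fact_pos); apply/eqP.
transitivity m`!; first by rewrite -e1 -e2; ring.
by rewrite -e3 -e4 subnDA; ring.
Qed.

Lemma bin_rearrange n k l :
  'C(n, l) * 'C(l, k) * 'C(n - l, k)
  = 'C(n, 2 * k) * 'C(2 * k, k) * 'C(n - 2 * k, l - k) * (k <= l).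
Proof.
case: (leqP k l) => [le_kl | lt_lk]; last by rewrite (bin_small lt_lk) !muln0 mul0n.
have sym : 'C(l + k, l) = 'C(l + k, k) by rewrite -[RHS]bin_sub ?leq_addl // addnK.
have inner : 'C(l + k, k) * 'C(l, k) = 'C(l + k, 2 * k) * 'C(2 * k, k).
  by have := bin_mul_sub (l + k) k k; rewrite addnK addnn mul2n.
have outer : 'C(n, 2 * k) * 'C(n - 2 * k, l - k) = 'C(n, l + k) * 'C(l + k, 2 * k).
  by rewrite bin_mul_sub; have -> : 2 * k + (l - k) = l + k by lia.
rewrite muln1 mulnAC bin_mul_sub sym -mulnA inner mulnA -outer.
by rewrite mulnAC.
Qed.

Lemma sum_bin_shift N k B :
  N + k < B -> \sum_(0 <= l < B) 'C(N, l - k) * (k <= l) = 2 ^ N.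
Proof.
move=> lt_NkB.
rewrite (@big_cat_nat _ _ _ k) //=; last by apply: leq_trans (ltnW lt_NkB); apply: leq_addl.
rewrite [X in X + _]big_nat big1 ?add0n; last first.
  by move=> l /andP[_ lt_lk]; rewrite leqNgt lt_lk muln0.
rewrite -{1}(add0n k) big_addn.
rewrite (eq_bigr (fun i => 'C(N, i))) => [|i _]; last by rewrite addnK leq_addl muln1.
rewrite (@big_cat_nat _ _ _ N.+1) //=; last by rewrite ltn_subRL addnC.
have -> : \sum_(N.+1 <= i < B - k) 'C(N, i) = 0.
  by rewrite big_nat big1 // => i /andP[lt_Ni _]; apply: bin_small.
rewrite addn0.
have := expnDn 1 1 N; rewrite addnn -mul2n muln1 => ->.
by rewrite big_mkord; apply: eq_bigr => i _; rewrite !exp1n !muln1.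
Qed.

Lemma multinomial_fact n k l : k <= l -> l + k <= n ->
  'C(n, l) * 'C(l, k) * 'C(n - l, k) * (k`! ^ 2 * (l - k)`! * (n - k - l)`!) = n`!.
Proof.
move=> le_kl le_lkn.
have e1 : 'C(n, l) * (l`! * (n - l)`!) = n`! by rewrite bin_fact //; lia.
have e2 := bin_fact le_kl.
have e3 : 'C(n - l, k) * (k`! * (n - l - k)`!) = (n - l)`! by rewrite bin_fact //; lia.
by rewrite subnAC -e1 -e2 -e3 -mulnn [in RHS]mulnACA [in RHS](mulnACA (k`!)) !mulnA.
Qed.

Lemma subz_Negz (m n : nat) : m < n -> (m%:Z - n%:Z)%R = Negz (n - m).-1.
Proof.
by move=> lt_mn; rewrite NegzE prednK ?subn_gt0 // -subzn ?(ltnW lt_mn) // GRing.opprB.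
Qed.

Lemma binz_subn a b c d :
  binz (a%:Z - b%:Z)%R (c%:Z - d%:Z)%R = 'C(a - b, c - d) * (b <= a) * (d <= c).
Proof.
case: (leqP b a) => [le_ba | lt_ab]; last by rewrite subz_Negz // muln0.
case: (leqP d c) => [le_dc | lt_cd]; last by rewrite (subzn le_ba) subz_Negz // muln0.
by rewrite (subzn le_ba) (subzn le_dc) !muln1.
Qed.

Definition nwords m (P : pred (seq bool)) := #|[set w : m.-tuple bool | P w]|.

Lemma nwords0 (P : pred (seq bool)) : nwords 0 P = P [::].
Proof.
rewrite /nwords -sum1dep_card big_mkcond (big_pred1 [tuple]) => [|w] /=.
  by case: (P _).
by rewrite [w]tuple0; apply/eqP.
Qed.

Lemma nwordsS m (P : pred (seq bool)) :
  nwords m.+1 P = nwords m (fun v => P (false :: v)) + nwords m (fun v => P (true :: v)).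
Proof. by rewrite /nwords card_tuple_cons big_bool addnC. Qed.

Lemma eq_nwords m (P Q : pred (seq bool)) : P =1 Q -> nwords m P = nwords m Q.
Proof. by move=> eqPQ; apply: eq_card => w; rewrite !inE eqPQ. Qed.

Lemma nwords_pred0 m (P : pred (seq bool)) : P =1 pred0 -> nwords m P = 0.
Proof. by move=> P0; rewrite /nwords (eq_card (B := pred0)) ?card0 // => w; rewrite inE P0. Qed.

Lemma nwords_andl m (b : bool) (P : pred (seq bool)) :
  nwords m (fun w => b && P w) = b * nwords m P.
Proof.
case: b; first by rewrite mul1n.
by rewrite mul0n nwords_pred0.
Qed.

Lemma nwords_partition m (P : pred (seq bool)) (f : seq bool -> nat) B :
  (forall w, f w < B) ->
  nwords m P = \sum_(0 <= i < B) nwords m (fun w => P w && (f w == i)).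
Proof.
by move=> fB; rewrite /nwords (card_partition_nat (f := fun w : m.-tuple bool => f w) (B := B)).
Qed.

Lemma occ_cons x w p : occ (x :: w) p = prefix p (x :: w) + occ w p.
Proof.
rewrite /occ /= -add1n iotaDl count_map -prefixE /=.
by congr (_ + _); apply: eq_count => i /=; rewrite add1n.
Qed.

Lemma occ_le_size w p : occ w p <= size w.
Proof. by rewrite /occ -[X in _ <= X](size_iota 0) count_size. Qed.

Lemma occ_consT w p : occ (true :: w) (false :: p) = occ w (false :: p).
Proof. by rewrite occ_cons. Qed.

Definition lead_class (w : seq bool) : nat :=
  if w is true :: _ then 0 else if w is false :: true :: _ then 1 else 2.

Lemma lead_class_lt3 w : lead_class w < 3.
Proof. by case: w => [|[] [|[] ?]]. Qed.

Lemma lead_class_consF w : lead_class (false :: w) = if lead_class w == 0 then 1 else 2.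
Proof. by case: w => [|[] [|[] w]]. Qed.

Lemma occ01_consF w :
  occ (false :: w) [:: false; true] = (lead_class w == 0) + occ w [:: false; true].
Proof. by rewrite occ_cons; case: w => [|[] [|[] w]]; rewrite //= prefix0s. Qed.

Lemma occ001_consF w :
  occ (false :: w) [:: false; false; true]
  = (lead_class w == 1) + occ w [:: false; false; true].
Proof. by rewrite occ_cons; case: w => [|[] [|[] w]]; rewrite //= prefix0s. Qed.

Lemma occ01_le_zeros w : occ w [:: false; true] <= count_mem false w.
Proof.
elim: w => [|[] w IHw] //; first by rewrite occ_consT.
by rewrite occ01_consF /= leq_add ?leq_b1.
Qed.

(* [x] counts the zeros not immediately followed by a 1; parametrising by it
   rather than by the number [l + x] of zeros keeps truncated subtraction out
   of the closed forms. *)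
Definition has_stats x b k l (w : seq bool) :=
  [&& count_mem false w == l + x, count_mem true w == b,
      occ w [:: false; false; true] == k & occ w [:: false; true] == l].

Lemma has_stats_consT x b k l w :
  has_stats x b k l (true :: w) = (0 < b) && has_stats x b.-1 k l w.
Proof. by rewrite /has_stats /= !occ_consT add0n add1n; case: b => [|b] /=; rewrite ?andbF. Qed.

Lemma has_stats_consF x b k l w :
  has_stats x b k l (false :: w) =
  match lead_class w with
  | 0 => (0 < l) && has_stats x b k l.-1 w
  | 1 => [&& 0 < x, 0 < k & has_stats x.-1 b k.-1 l w]
  | _ => (0 < x) && has_stats x.-1 b k l w
  end.
Proof.
rewrite /has_stats occ01_consF occ001_consF /=.
(* If [x = 0], every zero is followed by a 1, but the new leading zero is not. *)
have no_x0 P Q : [&& (count_mem false w).+1 == l, P, Q & occ w [:: false; true] == l] = false.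
  by apply/and4P => -[/eqP <- _ _ /eqP]; move: (occ01_le_zeros w); lia.
case: (lead_class w) => [|[|c]] /=; rewrite ?add0n ?add1n.
- by case: l {no_x0} => [|l] /=; rewrite ?andbF // addSn eqSS.
- case: k => [|k] /=; rewrite ?andbF ?eqSS //.
  by case: x => [|x]; rewrite ?addn0 ?no_x0 // addnS eqSS.
- by case: x => [|x]; rewrite ?addn0 ?no_x0 // addnS eqSS.
Qed.

Definition count_class m x b k l c :=
  nwords m (fun w => has_stats x b k l w && (lead_class w == c)).

Lemma count_class0 x b k l c :
  count_class 0 x b k l c = [&& x == 0, b == 0, k == 0, l == 0 & c == 2].
Proof.
rewrite /count_class nwords0 /has_stats /occ /= !(eq_sym 0) (eq_sym 2).
by case: x => [|x]; case: l => [|l]; rewrite /= ?andbF ?andbT -?andbA.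
Qed.

Lemma count_classS0 m x b k l :
  count_class m.+1 x b k l 0 = (0 < b) * nwords m (has_stats x b.-1 k l).
Proof.
rewrite /count_class nwordsS nwords_pred0 => [|v]; last first.
  by rewrite lead_class_consF; case: ifP; rewrite andbF.
by rewrite -nwords_andl; apply: eq_nwords => v; rewrite has_stats_consT andbT.
Qed.

Lemma count_classS1 m x b k l :
  count_class m.+1 x b k l 1 = (0 < l) * count_class m x b k l.-1 0.
Proof.
rewrite /count_class nwordsS [X in _ + X]nwords_pred0 ?addn0 => [|v]; last first.
  by rewrite andbF.
rewrite -nwords_andl; apply: eq_nwords => v.
rewrite has_stats_consF lead_class_consF.
by case: (lead_class v) => [|[|c]]; rewrite /= ?andbF ?andbT.
Qed.

Lemma count_classS2 m x b k l :
  count_class m.+1 x b k l 2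
  = (0 < x) * ((0 < k) * count_class m x.-1 b k.-1 l 1 + count_class m x.-1 b k l 2).
Proof.
rewrite /count_class nwordsS [X in _ + X]nwords_pred0 ?addn0 => [|v]; last first.
  by rewrite andbF.
rewrite (nwords_partition _ _ lead_class_lt3) !big_nat_recl // big_geq // addn0.
rewrite nwords_pred0 ?add0n => [|v]; last first.
  by rewrite lead_class_consF; case: (lead_class v) => [|c]; rewrite /= ?andbF.
rewrite mulnDr -!nwords_andl.
by congr (_ + _); apply: eq_nwords => v; rewrite has_stats_consF lead_class_consF;
  case: (lead_class v) => [|[|c]]; rewrite /= ?andbF ?andbT -?andbA.
Qed.

Lemma nwords_stats_classes m x b k l :
  nwords m (has_stats x b k l)
  = count_class m x b k l 0 + count_class m x b k l 1 + count_class m x b k l 2.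
Proof.
by rewrite (nwords_partition _ _ lead_class_lt3) !big_nat_recl // big_geq // addn0 addnA.
Qed.

Lemma count_class_ge3 m x b k l c : 2 < c -> count_class m x b k l c = 0.
Proof.
move=> c_gt2; apply: nwords_pred0 => w /=.
by rewrite ltn_eqF ?andbF // (leq_trans (lead_class_lt3 w) c_gt2).
Qed.

Definition class_size c x b k l : nat :=
  match c, b, k, l with
  | 0, b'.+1, _, _ => 'C(b', l) * 'C(l, k) * 'C(x, k)
  | 1, b'.+1, _, l'.+1 => 'C(b', l') * 'C(l', k) * 'C(x, k)
  | 2, 0, 0, 0 => 1
  | 2, b'.+1, k'.+1, l'.+1 => 'C(b', l') * 'C(l', k') * 'C(x, k)
  | _, _, _, _ => 0
  end.

Lemma class_size_sum x b k l :
  class_size 0 x b k l + class_size 1 x b k l + class_size 2 x b k l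
  = 'C(b, l) * 'C(l, k) * 'C(x, k).
Proof.
case: b => [|b]; first by case: k => [|k]; case: l => [|l]; rewrite /= ?bin0.
case: l => [|l]; first by case: k => [|k]; rewrite /= ?bin0 ?addn0.
by case: k => [|k]; rewrite /= !binS ?bin0; ring.
Qed.

Lemma class_size2S x b k l :
  class_size 2 x.+1 b k l = (0 < k) * class_size 1 x b k.-1 l + class_size 2 x b k l.
Proof. by case: b => [|b]; case: k => [|k]; case: l => [|l]; rewrite //= ?binS; ring. Qed.

Lemma count_classE m x b k l c :
  count_class m x b k l c = (l + x + b == m) * class_size c x b k l.
Proof.
elim: m x b k l c => [|m IHm] x b k l c.
  by rewrite count_class0; case: x l b k c => [|?] [|?] [|?] [|?] [|[|[|?]]].
case: c => [|[|[|c]]].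
- rewrite count_classS0 nwords_stats_classes !IHm -!mulnDr class_size_sum.
  by case: b => [|b]; rewrite ?mul0n ?muln0 // addnS eqSS mul1n.
- rewrite count_classS1 IHm.
  case: l => [|l]; first by case: b => [|b]; rewrite /= mul0n muln0.
  by rewrite !addSn eqSS mul1n.
- rewrite count_classS2 !IHm; case: x => [|x].
    by case: b k l => [|b] [|k] [|l]; rewrite /= ?addn0 ?mul0n ?muln0.
  by rewrite class_size2S addnS addSn eqSS mul1n mulnCA -mulnDr.
- by rewrite count_class_ge3 //= muln0.
Qed.

Lemma nwords_statsE m x b k l :
  nwords m (has_stats x b k l) = (l + x + b == m) * ('C(b, l) * 'C(l, k) * 'C(x, k)).
Proof. by rewrite nwords_stats_classes !count_classE -!mulnDr class_size_sum. Qed.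

Lemma card_inG_occ n k l :
  #|[set w : (2 * n).-tuple bool | [&& inG w, occ w [:: false; false; true] == k
                                      & occ w [:: false; true] == l]]|
  = 'C(n, l) * 'C(l, k) * 'C(n - l, k).
Proof.
case: (leqP l n) => [le_ln | lt_nl].
  transitivity (nwords (2 * n) (has_stats (n - l) n k l)).
    by apply: eq_card => w; rewrite !inE /inG /has_stats subnKC // -andbA.
  by rewrite nwords_statsE subnKC // addnn mul2n eqxx mul1n.
rewrite bin_small // !mul0n; apply/eqP; rewrite cards_eq0; apply/eqP/setP => w.
rewrite !inE /inG; apply/negbTE/and3P => -[/andP[/eqP zeros_n _] _ /eqP occ01_l].
by move: (occ01_le_zeros w); rewrite zeros_n occ01_l leqNgt lt_nl.
Qed.

Theorem corollary3p5 (n k l : nat) :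
  #|[set w : (2 * n).-tuple bool | inG w && (occ w [:: false; false; true] == k)]|
    = 'C(n, 2 * k) * 'C(2 * k, k) * 2 ^ (n - 2 * k)
  /\
  #|[set w : (2 * n).-tuple bool | [&& inG w, occ w [:: false; false; true] == k
                                      & occ w [:: false; true] == l]]|
    = 'C(n, 2 * k) * 'C(2 * k, k)
      * binz (n%:Z - (2 * k)%:Z)%R (l%:Z - k%:Z)%R
  /\
  (k <= l <= n - k ->
   #|[set w : (2 * n).-tuple bool | [&& inG w, occ w [:: false; false; true] == k
                                       & occ w [:: false; true] == l]]|
     = n`! %/ (k`! ^ 2 * (l - k)`! * (n - k - l)`!)).
Proof.
split; [|split].
- (* [2n + k] bounds [occ w 01] on words of length [2n] and exceeds [n - 2k + k]. *)
  rewrite (card_partition_nat (f := fun w : (2 * n).-tuple bool => occ w [:: false; true])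
                              (B := (2 * n + k).+1)) => [|w _]; last first.
    by rewrite ltnS (leq_trans (occ_le_size _ _)) // size_tuple leq_addr.
  rewrite (eq_bigr (fun j => 'C(n, 2 * k) * 'C(2 * k, k) * ('C(n - 2 * k, j - k) * (k <= j))))
    => [|j _]; last first.
    rewrite mulnA -bin_rearrange -card_inG_occ.
    by apply: eq_card => w; rewrite !inE andbA.
  by rewrite -big_distrr sum_bin_shift //; lia.
- rewrite card_inG_occ bin_rearrange binz_subn.
  case: (leqP (2 * k) n) => [_ | lt_n2k]; first by rewrite muln1 !mulnA.
  by rewrite bin_small // !mul0n.
- case/andP => le_kl le_lnk; have le_lkn : l + k <= n by lia.
  rewrite card_inG_occ -(multinomial_fact le_kl le_lkn) mulnK //.
  by rewrite !muln_gt0 ?expn_gt0 !fact_gt0.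
Qed.
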